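(* Let $f:X\to Y$ be a continuous map between sober topological spaces, and let $f^{\#}:C(Y)\to C(X)$, $W\mapsto f^{-1}(W)$. The following are equivalent: (1) $f$ is an epimorphism in the category $\mathbf{Sob}$ of sober spaces and continuous maps; (2) $f^{\#}$ is injective; (3) $f^{\#}$ is a monomorphism in the category of complete idealic semirings; (4) for every closed subset $z$ of $Y$, the set $f(X)\cap z$ is dense in $z$.
   Context: A topological space is sober if every irreducible closed subset has a unique generic point. An idealic semiring is a set with two commutative associative operations $+,\cdot$ with units $0,1$, where $+$ is idempotent, $\cdot$ distributes over $+$, $0$ is absorbing for $\cdot$ and $1$ is absorbing for $+$; it is complete if arbitrary (infinite) sums exist and multiplication distributes over them, and morphisms of complete idealic semirings preserve $0,1$, products and arbitrary sums. For a sober space $X$, $C(X)$ is the set of closed subsets with $Z+W=Z\cap W$ (arbitrary sums being intersections), $Z\cdot W=Z\cup W$, $0=X$, $1=\emptyset$; this is a complete idealic semiring with idempotent multiplication, and $f^{\#}$ is a morphism of such. *)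

From HB Require Import structures.
From mathcomp Require Import all_boot all_order all_algebra.
From mathcomp Require Import all_classical all_reals all_analysis.

Set Implicit Arguments.
Unset Strict Implicit.
Unset Printing Implicit Defensive.

Local Open Scope classical_set_scope.

Definition irreducible_closed (T : topologicalType) (Z : set T) : Prop :=
  [/\ closed Z, Z !=set0 &
      forall A B : set T, closed A -> closed B -> Z `<=` A `|` B ->
        Z `<=` A \/ Z `<=` B].

Definition generic_point (T : topologicalType) (Z : set T) (x : T) : Prop :=
  closure [set x] = Z.

Definition sober (T : topologicalType) : Prop :=
  forall Z : set T, irreducible_closed Z -> exists! x, generic_point Z x.

Definition sob_epi (X Y : topologicalType) (f : X -> Y) : Prop :=
  forall (Z : topologicalType), sober Z ->
  forall g h : Y -> Z, continuous g -> continuous h ->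
    g \o f = h \o f -> g = h.

(* Raw data: carrier, +, *, 0, 1 and an arbitrary-sum operation on subsets
   (since + is idempotent, a sum of a family only depends on its set of
   values). *)
Record csr := CSR {
  car :> Type;
  cadd : car -> car -> car;
  cmul : car -> car -> car;
  czero : car;
  cone : car;
  csum : set car -> car }.

Definition cle (A : csr) (x y : A) : Prop := cadd x y = y.

Definition is_complete_idealic_semiring (A : csr) : Prop :=
  [/\ [/\ (forall x y z : A, cadd x (cadd y z) = cadd (cadd x y) z),
          (forall x y : A, cadd x y = cadd y x),
          (forall x : A, cadd (czero A) x = x) &
          (forall x : A, cadd x x = x)],
      [/\ (forall x y z : A, cmul x (cmul y z) = cmul (cmul x y) z),
          (forall x y : A, cmul x y = cmul y x) &
          (forall x : A, cmul (cone A) x = x)],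
      [/\ (forall x y z : A, cmul x (cadd y z) = cadd (cmul x y) (cmul x z)),
          (forall x : A, cmul (czero A) x = czero A) &
          (forall x : A, cadd (cone A) x = cone A)] &
      [/\ (forall S : set A, forall s, S s -> cle s (csum S)),
          (forall (S : set A) u, (forall s, S s -> cle s u) -> cle (csum S) u) &
          (forall (x : A) (S : set A), cmul x (csum S) = csum ((cmul x) @` S))]].

Definition csr_morph (A B : csr) (h : A -> B) : Prop :=
  [/\ h (czero A) = czero B, h (cone A) = cone B,
      (forall x y, h (cmul x y) = cmul (h x) (h y)) &
      (forall S : set A, h (csum S) = csum (h @` S))].

Definition cis_mono (A B : csr) (h : A -> B) : Prop :=
  forall (D : csr), is_complete_idealic_semiring D ->
  forall a b : D -> A, csr_morph a -> csr_morph b ->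
    h \o a = h \o b -> a = b.

Definition closed_set (X : topologicalType) := {Z : set X | closed Z}.

Definition CX (X : topologicalType) : csr :=
  @CSR (closed_set X)
    (fun Z W => exist _ (sval Z `&` sval W) (closedI (proj2_sig Z) (proj2_sig W)))
    (fun Z W => exist _ (sval Z `|` sval W) (closedU (proj2_sig Z) (proj2_sig W)))
    (exist _ setT closedT)
    (exist _ set0 closed0)
    (fun S => exist _ (\bigcap_(Z in S) sval Z)
                (closed_bigI (fun Z _ => proj2_sig Z))).

Definition fsharp (X Y : topologicalType) (f : X -> Y) (fc : continuous f)
  : CX Y -> CX X :=
  fun W => exist _ (f @^-1` sval W)
             (proj1 (continuous_closedP f) fc _ (proj2_sig W)).

(* Everything goes through condition (4), that f(X) is strongly dense. It lets
   a closed set of Y be recovered from its preimage, which gives (4) <-> (2).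
   If g, h : Y -> Z are continuous and agree on f(X), then g^-1 of the closure
   of g y is a closed set containing y, so by (4) it lies in the closed set
   h^-1 of that closure: h y specializes g y and vice versa, and sobriety of Z
   (through T0) gives g = h. Conversely, the Sierpinski space is sober and the
   indicator of each open set of Y is a continuous map into it, so an
   epimorphism f in Sob separates closed sets by their preimages, which is
   (2). Finally, a morphism h of complete idealic semirings is mono iff
   injective, by testing it against its kernel pair {(a, b) | h a = h b}. *)

From Pilot Require Import Defs.
From HB Require Import structures.
From mathcomp Require Import all_boot all_order all_algebra.
From mathcomp Require Import all_classical all_reals all_analysis.
(* [cadd] and [czero] are also names of charge operations in [all_analysis]. *)
Import Defs.

Local Open Scope classical_set_scope.

Definition sierpinski := bool.
HB.instance Definition _ := Choice.on sierpinski.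

(* [true] is the open point: a set is open iff it is up-closed. *)
Definition sierpinski_open (A : set sierpinski) : Prop := A false -> A true.

Lemma sierpinski_openT : sierpinski_open setT. Proof. by []. Qed.

Lemma sierpinski_openI : setI_closed sierpinski_open.
Proof. by move=> A B oA oB [/oA ? /oB ?]. Qed.

Lemma sierpinski_open_bigcup (I : Type) (F : I -> set sierpinski) :
  (forall i, sierpinski_open (F i)) -> sierpinski_open (\bigcup_i F i).
Proof. by move=> oF [i _ Fi]; exists i => //; apply: oF. Qed.

HB.instance Definition _ := isOpenTopological.Build sierpinski
  sierpinski_openT sierpinski_openI sierpinski_open_bigcup.

Lemma sierpinski_openE (A : set sierpinski) : open A = sierpinski_open A.
Proof. by []. Qed.

Lemma sierpinski_closed {Z : set sierpinski} : closed Z -> Z true -> Z false.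
Proof. by rewrite -openC sierpinski_openE => oCZ Zt; apply: contrapT => /oCZ. Qed.

Lemma sierpinski_closed_false : closed [set false : sierpinski].
Proof. by rewrite -openC sierpinski_openE => /(_ erefl). Qed.

Lemma closure_sierpinski1 (b : sierpinski) :
  closure [set b] = if b then setT else [set false].
Proof.
apply/seteqP; split; case: b.
- by [].
- by rewrite closureE; apply: smallest_sub; [exact: sierpinski_closed_false|].
- have cl_t : closure [set true : sierpinski] true by exact: subset_closure.
  by case=> _ //; exact: sierpinski_closed (@closed_closure _ _) cl_t.
- by move=> _ ->; exact: subset_closure.
Qed.

Lemma closure_sierpinski1_true (b : sierpinski) : closure [set b] true <-> b.
Proof. by rewrite closure_sierpinski1; case: b. Qed.

Lemma sierpinski_sober : sober sierpinski.
Proof.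
move=> Z [cZ [z Zz] _].
have Zf : Z false by case: z Zz => // /(sierpinski_closed cZ).
have generic_uniq x : generic_point Z x -> `[< Z true >] = x.
  by move=> <-; apply: asbool_equiv_eqP (closure_sierpinski1_true x); apply: idP.
exists `[< Z true >]; split => [|x /generic_uniq //].
rewrite /generic_point closure_sierpinski1.
by case: asboolP => Zt; apply/seteqP; split => [[]|[]].
Qed.

Definition sierpinski_indicator {T : Type} (A : set T) (t : T) : sierpinski :=
  `[< ~ A t >].

Lemma continuous_sierpinski_indicator (T : topologicalType) (A : set T) :
  closed A -> continuous (sierpinski_indicator A).
Proof.
move=> cA; apply/continuousP => B; rewrite sierpinski_openE => oB.
rewrite /sierpinski_indicator.
have [Bf|nBf] := pselect (B false).
  suff -> : (fun t => `[< ~ A t >]) @^-1` B = setT by exact: openT.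
  by apply/seteqP; split => // t _ /=; case: asboolP => _ //; exact: oB.
have [Bt|nBt] := pselect (B true).
  suff -> : (fun t => `[< ~ A t >]) @^-1` B = ~` A by rewrite openC.
  by apply/seteqP; split => t /=; case: asboolP.
suff -> : (fun t => `[< ~ A t >]) @^-1` B = set0 by exact: open0.
by apply/seteqP; split => // t /=; case: asboolP.
Qed.

Lemma sierpinski_indicator_inj (T : Type) : injective (@sierpinski_indicator T).
Proof.
move=> A B eAB; apply/funext => t; apply/propext.
have [nAB nBA] : ~ A t <-> ~ B t.
  by apply: asbool_eq_equiv; rewrite -/(sierpinski_indicator A t) eAB.
by split=> ?; apply: contrapT => ?; [apply: nBA | apply: nAB].
Qed.

Lemma sober_closure1_inj {T : topologicalType} :
  sober T -> injective (fun p : T => closure [set p]).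
Proof.
move=> sT p q clpq.
have irr : irreducible_closed (closure [set p]).
  split; [exact: closed_closure | by exists p; apply: subset_closure |].
  move=> A B cA cB /(_ p (subset_closure (erefl p))) [Ap|Bp];
    [left | right]; rewrite closureE; apply: smallest_sub => // _ -> //.
have [x [_ generic_uniq]] := sT _ irr.
by rewrite -(generic_uniq p erefl) (generic_uniq q (esym clpq)).
Qed.

Definition strongly_dense {T : topologicalType} (A : set T) : Prop :=
  forall z : set T, closed z -> z `<=` closure (A `&` z).

Lemma closed_set_inj (T : topologicalType) : injective (@sval _ (@closed T)).
Proof. by move=> [A cA] [B cB] /= AB; exact: eq_exist. Qed.

Lemma CX_cle (T : topologicalType) (Z W : CX T) : cle Z W <-> sval W `<=` sval Z.
Proof.
split=> [/(congr1 sval) /= <-|/setIidr ZW]; first exact: subIsetl.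
exact: closed_set_inj.
Qed.

Lemma CX_cis (T : topologicalType) : is_complete_idealic_semiring (CX T).
Proof.
split; first split.
- by move=> *; apply: closed_set_inj; rewrite /= setIA.
- by move=> *; apply: closed_set_inj; rewrite /= setIC.
- by move=> *; apply: closed_set_inj; rewrite /= setTI.
- by move=> *; apply: closed_set_inj; rewrite /= setIid.
- split.
  + by move=> *; apply: closed_set_inj; rewrite /= setUA.
  + by move=> *; apply: closed_set_inj; rewrite /= setUC.
  + by move=> *; apply: closed_set_inj; rewrite /= set0U.
- split.
  + by move=> *; apply: closed_set_inj; rewrite /= setUIr.
  + by move=> *; apply: closed_set_inj; rewrite /= setTU.
  + by move=> *; apply: closed_set_inj; rewrite /= set0I.
- split.
  + by move=> S s Ss; apply/CX_cle; exact: bigcap_inf.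
  + by move=> S u ub; apply/CX_cle; apply: sub_bigcap => s /ub /CX_cle.
  + by move=> Z S; apply: closed_set_inj; rewrite /= bigcap_image setU_bigcapr.
Qed.

Section KernelPair.
Variables (A B : csr) (h : A -> B).
Hypotheses (h_morph : csr_morph h)
  (h_add : forall x y, h (cadd x y) = cadd (h x) (h y)).

Record kernel_pair := KernelPair { kp1 : A; kp2 : A; kp_eq : h kp1 = h kp2 }.
Arguments KernelPair {kp1 kp2}.

Lemma kernel_pair_eq (d e : kernel_pair) : kp1 d = kp1 e -> kp2 d = kp2 e -> d = e.
Proof.
case: d e => a b hab [a' b' hab'] /= ea eb; subst a' b'; congr KernelPair.
exact: Prop_irrelevance.
Qed.

Lemma kp_add_compat (d e : kernel_pair) :
  h (cadd (kp1 d) (kp1 e)) = h (cadd (kp2 d) (kp2 e)).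
Proof. by rewrite !h_add !kp_eq. Qed.

Lemma kp_mul_compat (d e : kernel_pair) :
  h (cmul (kp1 d) (kp1 e)) = h (cmul (kp2 d) (kp2 e)).
Proof. by case: h_morph => _ _ h_mul _; rewrite !h_mul !kp_eq. Qed.

Lemma kp_sum_compat (S : set kernel_pair) :
  h (csum (kp1 @` S)) = h (csum (kp2 @` S)).
Proof.
case: h_morph => _ _ _ h_sum; rewrite !h_sum !image_comp; congr csum.
by apply: eq_imagel => d _; exact: kp_eq.
Qed.

Definition kernel_pair_csr : csr :=
  @CSR kernel_pair
    (fun d e => KernelPair (kp_add_compat d e))
    (fun d e => KernelPair (kp_mul_compat d e))
    (KernelPair (erefl (h (czero A))))
    (KernelPair (erefl (h (cone A))))
    (fun S => KernelPair (kp_sum_compat S)).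

Lemma kernel_pair_cle (d e : kernel_pair_csr) :
  cle d e <-> cle (kp1 d) (kp1 e) /\ cle (kp2 d) (kp2 e).
Proof.
rewrite /cle; split=> [de|[e1 e2]]; last exact: kernel_pair_eq.
by split; [exact (congr1 kp1 de) | exact (congr1 kp2 de)].
Qed.

Lemma kernel_pair_cis :
  is_complete_idealic_semiring A -> is_complete_idealic_semiring kernel_pair_csr.
Proof.
move=> [[addA addC add0 addI] [mulA mulC mul1] [mulDr mul0 add1]
  [sum_ub sum_lub mul_sum]].
split; first split.
- by move=> *; apply: kernel_pair_eq; exact: addA.
- by move=> *; apply: kernel_pair_eq; exact: addC.
- by move=> *; apply: kernel_pair_eq; exact: add0.
- by move=> *; apply: kernel_pair_eq; exact: addI.
- split.
  + by move=> *; apply: kernel_pair_eq; exact: mulA.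
  + by move=> *; apply: kernel_pair_eq; exact: mulC.
  + by move=> *; apply: kernel_pair_eq; exact: mul1.
- split.
  + by move=> *; apply: kernel_pair_eq; exact: mulDr.
  + by move=> *; apply: kernel_pair_eq; exact: mul0.
  + by move=> *; apply: kernel_pair_eq; exact: add1.
- split.
  + by move=> S s Ss; apply/kernel_pair_cle; split; apply: sum_ub; exists s.
  + move=> S u ub; apply/kernel_pair_cle.
    by split; apply: sum_lub => _ [s /ub /kernel_pair_cle [? ?] <-].
  + by move=> x S; apply: kernel_pair_eq; rewrite /= mul_sum !image_comp.
Qed.

Lemma csr_morph_kp1 : csr_morph (kp1 : kernel_pair_csr -> A).
Proof. by []. Qed.

Lemma csr_morph_kp2 : csr_morph (kp2 : kernel_pair_csr -> A).
Proof. by []. Qed.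

(* [h] equalises the two projections of its kernel pair. *)
Lemma cis_mono_inj : is_complete_idealic_semiring A -> cis_mono h -> injective h.
Proof.
move=> Acis h_mono a b hab.
have := h_mono _ (kernel_pair_cis Acis) _ _ csr_morph_kp1 csr_morph_kp2 (funext kp_eq).
by move=> /(congr1 (@^~ (KernelPair hab))).
Qed.

End KernelPair.

Lemma inj_cis_mono (A B : csr) (h : A -> B) : injective h -> cis_mono h.
Proof.
move=> h_inj D _ a b _ _ hab; apply/funext => d; apply: h_inj.
exact (congr1 (@^~ d) hab).
Qed.

Section Preimage.
Variables (X Y : topologicalType) (f : X -> Y) (fc : continuous f).

Lemma fsharp_morph : csr_morph (fsharp fc).
Proof.
split=> [||Z W|S]; try exact: closed_set_inj.
by apply: closed_set_inj; rewrite /= bigcap_image preimage_bigcap.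
Qed.

Lemma fsharp_add (Z W : CX Y) :
  fsharp fc (cadd Z W) = cadd (fsharp fc Z) (fsharp fc W).
Proof. exact: closed_set_inj. Qed.

Lemma strongly_dense_preimage_sub {Z W : set Y} :
  strongly_dense (range f) -> closed Z -> closed W ->
  f @^-1` Z `<=` f @^-1` W -> Z `<=` W.
Proof.
move=> dense_f cZ cW fZW y Zy; have := dense_f _ cZ y Zy.
by rewrite closureE; apply: (smallest_sub cW) => _ [[x _ <-] /fZW].
Qed.

Lemma fsharp_injP : injective (fsharp fc) <-> strongly_dense (range f).
Proof.
split=> [fsharp_inj z cz | dense_f Z W /(congr1 sval) /= fZW].
- pose clz : CX Y := exist _ (closure (range f `&` z)) (@closed_closure _ _).
  have fsharp_clz : fsharp fc clz = fsharp fc (exist _ z cz).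
    apply/closed_set_inj/seteqP; split => /= [x|x zfx].
      by rewrite closureE; apply: smallest_sub => // _ [].
    by apply: subset_closure; split => //; exists x.
  by have /(congr1 sval) /= -> := fsharp_inj _ _ fsharp_clz.
- apply/closed_set_inj/seteqP; split;
    by apply: strongly_dense_preimage_sub; rewrite ?fZW //; apply: proj2_sig.
Qed.

Lemma strongly_dense_sob_epi : strongly_dense (range f) -> sob_epi f.
Proof.
move=> dense_f Z sZ.
have specializes (g h : Y -> Z) (y : Y) : continuous g -> continuous h ->
    g \o f = h \o f -> closure [set h y] `<=` closure [set g y].
  move=> cg ch gfhf; set C := closure [set g y].
  have cC : closed C := @closed_closure _ _.
  have gCy : (g @^-1` C) y by exact: subset_closure.
  have hCy : (h @^-1` C) y.
    apply: (strongly_dense_preimage_sub dense_f _ _ _ _ gCy).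
    - exact: (proj1 (continuous_closedP g) cg).
    - exact: (proj1 (continuous_closedP h) ch).
    - by move=> x; rewrite /= -[g (f x)]/((g \o f) x) gfhf.
  by rewrite closureE; apply: smallest_sub => // _ ->.
move=> g h cg ch gfhf; apply/funext => y; apply: (sober_closure1_inj sZ).
by apply/seteqP; split; apply: specializes.
Qed.

Lemma sob_epi_fsharp_inj : sob_epi f -> injective (fsharp fc).
Proof.
move=> f_epi [Z cZ] [W cW] /(congr1 sval) /= fZW; apply: closed_set_inj => /=.
apply: sierpinski_indicator_inj; apply: (f_epi _ sierpinski_sober);
  try exact: continuous_sierpinski_indicator.
by rewrite -[LHS]/(sierpinski_indicator (f @^-1` Z)) fZW.
Qed.

End Preimage.

Theorem proposition1p6 (X Y : topologicalType) (f : X -> Y)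
  (sX : sober X) (sY : sober Y) (fc : continuous f) :
  [/\ (sob_epi f <-> injective (fsharp fc)),
      (injective (fsharp fc) <-> cis_mono (fsharp fc)) &
      (cis_mono (fsharp fc) <->
         forall z : set Y, closed z -> z `<=` closure (range f `&` z))].
Proof.
have inj_dense : injective (fsharp fc) <-> strongly_dense (range f).
  exact: fsharp_injP.
have mono_inj : cis_mono (fsharp fc) -> injective (fsharp fc).
  by apply: cis_mono_inj; [exact: fsharp_morph | exact: fsharp_add | exact: CX_cis].
split; split.
- exact: sob_epi_fsharp_inj.
- by move=> /inj_dense; exact: strongly_dense_sob_epi.
- exact: inj_cis_mono.
- exact: mono_inj.
- by move=> /mono_inj /inj_dense.
- by move=> /inj_dense /inj_cis_mono.
Qed.
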